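(* Let $(\mathcal A,\gamma,\phi)$ be a $\mathbb Z_2$-graded noncommutative probability space and let $\mathcal U$ be the infinite graded tensor product of copies of $(\mathcal A,\gamma,\phi)$, with product functional $\tilde\phi$ and with $X^{(k)}$ denoting the image of $X\in\mathcal A$ in the $k$-th tensor factor $\mathcal A_k$. Then the algebras $(\mathcal A_k)_{k\in\mathbb N}$ are interchangeable: for all $X_1,\dots,X_n\in\mathcal A$, all indices $i_1,\dots,i_n\in\mathbb N$ and every bijection $\sigma$ of $\mathbb N$, $\tilde\phi(X_1^{(i_1)}\cdots X_n^{(i_n)})=\tilde\phi(X_1^{(\sigma(i_1))}\cdots X_n^{(\sigma(i_n))})$.
   Context: A $\mathbb Z_2$-graded noncommutative probability space $(\mathcal A,\gamma,\phi)$ consists of a complex unital algebra $\mathcal A=\mathcal A_+\oplus\mathcal A_-$ graded by an algebra automorphism $\gamma$ of order 2 ($\mathcal A_\pm=\{X:\gamma(X)=\pm X\}$) and a unital linear functional $\phi$ with $\phi\circ\gamma=\phi$. Homogeneous elements have degree $\partial X=0$ for $X\in\mathcal A_+$, $\partial X=1$ for $X\in\mathcal A_-$. The graded tensor product $\mathcal A_1\otimes_2\mathcal A_2$ of graded algebras is the vector space tensor product with multiplication $(X_1\otimes X_2)(X_1'\otimes X_2')=(-1)^{\partial X_2\,\partial X_1'}X_1X_1'\otimes X_2X_2'$ for homogeneous elements, extended bilinearly, grading $\gamma_1\otimes\gamma_2$, and functional $\phi_1\otimes\phi_2$; it is associative. The infinite graded tensor product is the union (inductive limit) of the finite graded tensor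 products $\mathcal A^{\otimes_2 N}$ under $x\mapsto x\otimes1$, with $\tilde\phi$ the product functional, and $X^{(k)}=1\otimes\cdots\otimes1\otimes X\otimes1\otimes\cdots$ ($X$ in position $k$). *)

From HB Require Import structures.
From mathcomp Require Import all_boot all_order all_algebra.
From mathcomp Require Import reals complex.

Set Implicit Arguments.
Unset Strict Implicit.
Unset Printing Implicit Defensive.

Import GRing.Theory Num.Theory.
Local Open Scope ring_scope.

Definition graded_ncps (R : realType) (A : algType R[i])
    (gamma : A -> A) (phi : A -> R[i]) : Prop :=
  (forall (a : R[i]) (x y : A), gamma (a *: x + y) = a *: gamma x + gamma y) /\
  (forall x y : A, gamma (x * y) = gamma x * gamma y) /\
  gamma 1 = 1 /\
  (forall x : A, gamma (gamma x) = x) /\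
  (forall (a : R[i]) (x y : A), phi (a *: x + y) = a * phi x + phi y) /\
  phi 1 = 1 /\
  (forall x : A, phi (gamma x) = phi x).

Section GradedTensor.
Variables (R : realType) (A : algType R[i]) (gamma : A -> A) (phi : A -> R[i]).

(* homogeneous components: A_+ (degree false = 0) and A_- (degree true = 1) *)
Definition hpart (b : bool) (x : A) : A :=
  if b then 2%:R^-1 *: (x - gamma x) else 2%:R^-1 *: (x + gamma x).

(* An elementary tensor c * (x_0 (x) x_1 (x) ... (x) x_{m-1} (x) 1 (x) 1 ...)
   of the infinite graded tensor product, whose factors x_k are homogeneous of
   the recorded degrees (the bool labels). *)
Definition hterm := (R[i] * seq (bool * A))%type.

(* an element of the infinite graded tensor product U, presented as a formal
   finite linear combination (sum) of homogeneous elementary tensors *)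
Definition tens := seq hterm.

Definition hfac (s : seq (bool * A)) (k : nat) : bool * A := nth (false, 1) s k.

(* graded product of homogeneous elementary tensors:
   (x_0 (x) ... )(y_0 (x) ...) = (-1)^(sum_{j<k} dx_k dy_j) x_0y_0 (x) x_1y_1 ... *)
Definition hterm_mul (u v : hterm) : hterm :=
  let n := maxn (size u.2) (size v.2) in
  let sgn := (\sum_(k < n) \sum_(j < k)
                ((hfac u.2 k).1 && (hfac v.2 j).1 : nat))%N in
  ((-1) ^+ sgn * u.1 * v.1,
   [seq ((hfac u.2 k).1 (+) (hfac v.2 k).1, (hfac u.2 k).2 * (hfac v.2 k).2)
   | k <- iota 0 n]).

Definition tens_mul (U V : tens) : tens := [seq hterm_mul u v | u <- U, v <- V].

Definition tens_one : tens := [:: (1, [::])].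

(* X^{(k)} = 1 (x) ... (x) 1 (x) X (x) 1 (x) ... with X in position k,
   written as X_+^{(k)} + X_-^{(k)} *)
Definition tens_embed (k : nat) (x : A) : tens :=
  [seq (1, rcons (nseq k (false, 1)) (b, hpart b x)) | b <- [:: false; true]].

Definition tens_phi (U : tens) : R[i] :=
  \sum_(u <- U) u.1 * \prod_(p <- u.2) phi p.2.

End GradedTensor.

From HB Require Import structures.
From mathcomp Require Import all_boot all_order all_algebra.
From mathcomp Require Import reals complex.

Set Implicit Arguments.
Unset Strict Implicit.
Unset Printing Implicit Defensive.

Import GRing.Theory Num.Theory.
Local Open Scope ring_scope.

(* Expanding every X^(i) into its even and odd parts writes the product as a sum
   of words of homogeneous pieces.  The elementary tensor of a word carries at
   position k the ordered product of the pieces placed at k, and the sign (-1)^N,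
   where N counts the pairs of odd pieces whose positions occur in reverse order.
   As phi o gamma = phi, phi vanishes on odd elements, so only words in which every
   position carries an even number of odd pieces contribute.  For those, an
   injective relabelling of the positions only reverses the order of pairs of odd
   pieces sitting at two distinct positions p and q, and there are
   (#odd at p) * (#odd at q) of them, an even number: the sign is unchanged. *)

Section PairParity.
Variables (T : eqType) (h : T -> T -> bool).

Fixpoint parity_with (e : T) (Q : seq T) : bool :=
  if Q is y :: Q' then h e y (+) parity_with e Q' else false.

Fixpoint pair_parity (Q : seq T) : bool :=
  if Q is e :: Q' then parity_with e Q' (+) pair_parity Q' else false.

Lemma parity_with_cat e Q1 Q2 :
  parity_with e (Q1 ++ Q2) = parity_with e Q1 (+) parity_with e Q2.
Proof. by elim: Q1 => //= y Q1 ->; rewrite addbA. Qed.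

Lemma parity_with_unrelated e Q : (forall y, h e y = false) -> parity_with e Q = false.
Proof. by move=> he; elim: Q => //= y Q ->; rewrite he. Qed.

Hypothesis h_sym : forall x y, h x y = h y x.

Lemma pair_parity_insert e Q1 Q2 :
  pair_parity (Q1 ++ e :: Q2) = parity_with e (Q1 ++ Q2) (+) pair_parity (Q1 ++ Q2).
Proof.
elim: Q1 => //= a Q1 ->; rewrite !parity_with_cat /= (h_sym e a).
by case: (h a e); case: (parity_with a Q1); case: (parity_with a Q2);
  case: (parity_with e Q1); case: (parity_with e Q2); case: (pair_parity _).
Qed.

Variable unrelated : pred T.
Hypotheses (h_irr : forall x, h x x = false)
  (h_unrelated : forall x y, unrelated x -> h x y = false).

Lemma pair_parity_even Q :
  (forall e, ~~ unrelated e -> ~~ odd (count_mem e Q)) -> pair_parity Q = false.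
Proof.
have [m] := ubnP (size Q); elim: m Q => // m IH [|e Q] //= /ltnSE sizeQ evenQ.
have [e_unrel|e_rel] := boolP (unrelated e).
  rewrite parity_with_unrelated ?IH // => [e' e'_rel|y]; last exact: h_unrelated.
  have := evenQ e' e'_rel => /=; case: eqP => [Ee|_] //.
  by rewrite -Ee e_unrel in e'_rel.
have eQ : e \in Q.
  have := evenQ e e_rel; rewrite /= eqxx add1n /= negbK => /odd_gt0.
  by rewrite -has_count has_pred1.
case/splitPr: eQ sizeQ evenQ => Q1 Q2 sizeQ evenQ.
rewrite pair_parity_insert !parity_with_cat /= h_irr addFb IH ?addKb //.
  by move: sizeQ; rewrite !size_cat /= addnS => /ltnW.
move=> e' e'_rel; have := evenQ e' e'_rel.
by rewrite /= !count_cat /= !oddD oddb addbCA addKb.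
Qed.

End PairParity.

Lemma pair_parity_addb (T : eqType) (h1 h2 : T -> T -> bool) Q :
  pair_parity h1 Q (+) pair_parity h2 Q = pair_parity (fun x y => h1 x y (+) h2 x y) Q.
Proof.
have parity_addb e Q' : parity_with h1 e Q' (+) parity_with h2 e Q'
                        = parity_with (fun x y => h1 x y (+) h2 x y) e Q'.
  elim: Q' => //= y Q' <-.
  by case: (h1 e y); case: (h2 e y);
    case: (parity_with h1 e Q'); case: (parity_with h2 e Q').
elim: Q => //= e Q <-; rewrite -parity_addb.
by case: (pair_parity h1 Q); case: (pair_parity h2 Q);
  case: (parity_with h1 e Q); case: (parity_with h2 e Q).
Qed.

Lemma pair_parity_map (T U : eqType) (h : U -> U -> bool) (f : T -> U) Q :
  pair_parity h (map f Q) = pair_parity (fun x y => h (f x) (f y)) Q.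
Proof.
have parity_map e Q' :
    parity_with h (f e) (map f Q') = parity_with (fun x y => h (f x) (f y)) e Q'.
  by elim: Q' => //= y Q' ->.
by elim: Q => //= e Q ->; rewrite parity_map.
Qed.

Definition relabel (T : Type) (s : nat -> nat) (W : seq (nat * T)) : seq (nat * T) :=
  [seq (s w.1, w.2) | w <- W].

(* [e] precedes [y] in a word but sits at a larger position, so that moving the
   odd piece [e] to its position makes it pass the odd piece [y]. *)
Definition odd_inversion (e y : nat * bool) : bool := [&& e.2, y.2 & (y.1 < e.1)%N].

Lemma odd_inversion_relabel (s : nat -> nat) (Q : seq (nat * bool)) :
  injective s -> (forall k, ~~ odd (count_mem (k, true) Q)) ->
  pair_parity odd_inversion (relabel s Q) = pair_parity odd_inversion Q.
Proof.
move=> s_inj evenQ; apply/eqP/negbFE.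
rewrite negb_eqb pair_parity_map addbC pair_parity_addb.
apply: (@pair_parity_even _ _ _ (fun e => ~~ e.2)).
- move=> [p []] [q []] //; rewrite /odd_inversion /=.
  have [pq|pq|-> //] := ltngtP p q;
    have [_|_|/s_inj spq] := ltngtP (s p) (s q); try by [];
    by move: pq; rewrite spq ltnn.
- by move=> e; rewrite /odd_inversion !ltnn !andbF.
- by move=> [p []] [q c].
- by move=> [k []] //= _; apply: evenQ.
Qed.

Section Words.
Variables (R : realType) (A : algType R[i]).
Local Notation piece := (nat * (bool * A))%type.

Definition hterm_at (w : piece) : hterm A := (1, rcons (nseq w.1 (false, 1)) w.2).

Definition word_term (W : seq piece) : hterm A :=
  foldr (fun w t => hterm_mul (hterm_at w) t) (1, [::]) W.

Definition word_factor (W : seq piece) (k : nat) : bool * A :=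
  foldr (fun w f => if k == w.1 then (w.2.1 (+) f.1, w.2.2 * f.2) else f) (false, 1) W.

Definition word_degrees (W : seq piece) : seq (nat * bool) := [seq (w.1, w.2.1) | w <- W].

Lemma word_term_cons w W : word_term (w :: W) = hterm_mul (hterm_at w) (word_term W).
Proof. by []. Qed.

Lemma word_factor_cons w W k :
  word_factor (w :: W) k = if k == w.1
    then (w.2.1 (+) (word_factor W k).1, w.2.2 * (word_factor W k).2)
    else word_factor W k.
Proof. by []. Qed.

Lemma word_factor_cons_degree w W k :
  (word_factor (w :: W) k).1 = (k == w.1) && w.2.1 (+) (word_factor W k).1.
Proof. by rewrite word_factor_cons; case: ifP. Qed.

Lemma size_hterm_mul (u v : hterm A) :
  size (hterm_mul u v).2 = maxn (size u.2) (size v.2).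
Proof. by rewrite /= size_map size_iota. Qed.

Lemma hfac_hterm_mul (u v : hterm A) k :
  hfac (hterm_mul u v).2 k =
    ((hfac u.2 k).1 (+) (hfac v.2 k).1, (hfac u.2 k).2 * (hfac v.2 k).2).
Proof.
have [kn|nk] := ltnP k (maxn (size u.2) (size v.2)).
  by rewrite /hfac (nth_map 0%N) ?size_iota // nth_iota.
rewrite /hfac nth_default ?size_hterm_mul //.
by rewrite !nth_default ?mulr1 //; apply: leq_trans nk; rewrite ?leq_maxl ?leq_maxr.
Qed.

Lemma size_hterm_at w : size (hterm_at w).2 = w.1.+1.
Proof. by rewrite size_rcons size_nseq. Qed.

Lemma hfac_hterm_at w k : hfac (hterm_at w).2 k = if k == w.1 then w.2 else (false, 1).
Proof.
by rewrite /hfac nth_rcons size_nseq; case: ltngtP => // kw; rewrite nth_nseq kw.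
Qed.

Lemma hfac_word_term W k : hfac (word_term W).2 k = word_factor W k.
Proof.
elim: W => [|w W IH]; first by rewrite /hfac nth_nil.
rewrite word_term_cons hfac_hterm_mul hfac_hterm_at IH /=.
by case: ifP => // _; rewrite mul1r; case: (word_factor W k).
Qed.

Lemma position_lt_size_word_term W k : k \in map fst W -> (k < size (word_term W).2)%N.
Proof.
elim: W => // w W IH; rewrite word_term_cons size_hterm_mul size_hterm_at leq_max in_cons.
by case/predU1P => [->|/IH ->]; rewrite ?ltnSn ?orbT.
Qed.

Lemma word_factor_notin W k : k \notin map fst W -> word_factor W k = (false, 1).
Proof. by elim: W => //= w W IH; rewrite in_cons negb_or => /andP[/negbTE -> /IH]. Qed.

Lemma word_factor_relabel s W k :
  injective s -> word_factor (relabel s W) (s k) = word_factor W k.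
Proof. by move=> s_inj; elim: W => //= w W ->; rewrite (inj_eq s_inj). Qed.

Lemma word_factor_degree W k :
  (word_factor W k).1 = odd (count_mem (k, true) (word_degrees W)).
Proof.
elim: W => // w W IH.
by rewrite word_factor_cons_degree IH /= oddD oddb xpair_eqE eqb_id eq_sym.
Qed.

Lemma prod_sign_at (S : pzRingType) (b c : bool) (q p : nat) :
  \prod_(j < p) (-1) ^+ (b && ((j == q :> nat) && c))
    = (-1) ^+ [&& b, c & (q < p)%N] :> S.
Proof.
elim: p => [|p IH]; first by rewrite big_ord0 !andbF.
rewrite big_ord_recr /= {}IH -signr_addb [(q < p.+1)%N]ltnS.
by case: b c => [] [] //=; case: ltngtP.
Qed.

Lemma prod_sign_word_factor W (b : bool) p :
  \prod_(j < p) (-1) ^+ (b && (word_factor W j).1)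
    = (-1) ^+ parity_with odd_inversion (p, b) (word_degrees W) :> R[i].
Proof.
elim: W => [|w W IH]; first by rewrite big1 // => j _; rewrite andbF.
under eq_bigr do rewrite word_factor_cons_degree andb_addr signr_addb.
by rewrite big_split /= IH prod_sign_at -signr_addb.
Qed.

Lemma word_term_sign W :
  (word_term W).1 = (-1) ^+ pair_parity odd_inversion (word_degrees W).
Proof.
elim: W => [|w W IH]; first by rewrite expr0.
rewrite word_term_cons /hterm_mul /= signr_addb -IH mulr1; congr (_ * _).
set n := maxn _ _; have wn : (w.1 < n)%N by rewrite leq_max size_hterm_at ltnSn.
rewrite expr_sum (bigD1 (Ordinal wn)) //= [X in _ * X]big1 ?mulr1 => [|k kw].
  rewrite expr_sum -prod_sign_word_factor; apply: eq_bigr => j _.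
  by rewrite hfac_hterm_at eqxx hfac_word_term.
by rewrite hfac_hterm_at ifN //= big1 ?expr0.
Qed.

Lemma prod_phi_word_term (phi : A -> R[i]) W : phi 1 = 1 ->
  \prod_(q <- (word_term W).2) phi q.2
    = \prod_(k <- undup (map fst W)) phi (word_factor W k).2.
Proof.
move=> phi1; rewrite (big_nth (false, 1)).
under eq_bigr => k _ do rewrite -[nth _ _ _]/(hfac _ k) hfac_word_term.
rewrite (bigID (fun k => k \in map fst W)) /= [X in _ * X]big1 ?mulr1;
  last by move=> k /word_factor_notin ->.
rewrite -big_filter; apply/perm_big/uniq_perm;
  rewrite ?filter_uniq ?iota_uniq ?undup_uniq //.
move=> k; rewrite mem_filter mem_index_iota mem_undup.
by case: (boolP (k \in _)) => //= /position_lt_size_word_term ->.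
Qed.
End Words.

Section GradedSpace.
Variables (R : realType) (A : algType R[i]) (gamma : A -> A) (phi : A -> R[i]).
Hypothesis graded : graded_ncps gamma phi.
Local Notation piece := (nat * (bool * A))%type.

Definition homogeneous (x : bool * A) : Prop := gamma x.2 = (-1) ^+ x.1 *: x.2.

Lemma gammaD x y : gamma (x + y) = gamma x + gamma y.
Proof. by have [lin _] := graded; rewrite -[x]scale1r lin !scale1r. Qed.

Lemma gammaZ a x : gamma (a *: x) = a *: gamma x.
Proof.
have gamma0 : gamma 0 = 0 by apply: (addrI (gamma 0)); rewrite -gammaD !addr0.
by have [lin _] := graded; rewrite -[a *: x]addr0 lin gamma0 addr0.
Qed.

Lemma gammaN x : gamma (- x) = - gamma x.
Proof. by rewrite -scaleN1r gammaZ scaleN1r. Qed.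

Lemma phiD x y : phi (x + y) = phi x + phi y.
Proof.
by have [_ [_ [_ [_ [lin _]]]]] := graded; rewrite -[x]scale1r lin scale1r mul1r.
Qed.

Lemma phiZ a x : phi (a *: x) = a * phi x.
Proof.
have phi0 : phi 0 = 0 by apply: (addrI (phi 0)); rewrite -phiD !addr0.
by have [_ [_ [_ [_ [lin _]]]]] := graded; rewrite -[a *: x]addr0 lin phi0 addr0.
Qed.

Lemma hpart_homogeneous b x : homogeneous (b, hpart gamma b x).
Proof.
have [_ [_ [_ [invol _]]]] := graded.
rewrite /homogeneous /hpart; case: b => /=; rewrite gammaZ gammaD.
  by rewrite gammaN invol expr1 scaleN1r -scalerN opprB.
by rewrite invol expr0 scale1r addrC.
Qed.

Lemma word_factor_homogeneous (W : seq piece) k :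
  {in W, forall w, homogeneous w.2} -> homogeneous (word_factor W k).
Proof.
have [_ [mul [one _]]] := graded.
elim: W => [|w W IH] homW; first by rewrite /homogeneous one expr0 scale1r.
have {}IH : homogeneous (word_factor W k).
  by apply: IH => v vW; apply: homW; rewrite inE vW orbT.
rewrite word_factor_cons; case: ifP => // _.
rewrite /homogeneous /= mul (homW w (mem_head _ _)) IH.
by rewrite -scalerAl -scalerAr scalerA signr_addb.
Qed.

Lemma phi_odd_eq0 x : homogeneous (true, x) -> phi x = 0.
Proof.
have [_ [_ [_ [_ [_ [_ phi_gamma]]]]]] := graded.
rewrite /homogeneous /= expr1 => gammax.
have : phi x = - phi x by rewrite -mulN1r -phiZ -gammax phi_gamma.
by move/eqP; rewrite -subr_eq0 opprK -mulr2n mulrn_eq0 /= => /eqP.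
Qed.

Definition hterm_phi (t : hterm A) : R[i] := t.1 * \prod_(q <- t.2) phi q.2.

Lemma hterm_phi_word_relabel s (W : seq piece) :
  injective s -> {in W, forall w, homogeneous w.2} ->
  hterm_phi (word_term (relabel s W)) = hterm_phi (word_term W).
Proof.
move=> s_inj homW; have [_ [_ [_ [_ [_ [phi1 _]]]]]] := graded.
rewrite /hterm_phi !word_term_sign !prod_phi_word_term //.
have -> : map fst (relabel s W) = map s (map fst W) by rewrite /relabel -!map_comp.
have -> : word_degrees (relabel s W) = relabel s (word_degrees W).
  by rewrite /word_degrees /relabel -!map_comp.
rewrite (undup_map_inj s_inj) big_map; under eq_bigr do rewrite word_factor_relabel //.
have [/hasP[k kW odd_k]|/hasPn even] :=
  boolP (has (fun k => (word_factor W k).1) (undup (map fst W))).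
  rewrite (big_rem k kW) /= phi_odd_eq0 ?mul0r ?mulr0 //.
  by have := word_factor_homogeneous k homW; rewrite /homogeneous odd_k.
rewrite odd_inversion_relabel // => k; rewrite -word_factor_degree.
have [kW|/word_factor_notin -> //] := boolP (k \in map fst W).
by apply: even; rewrite mem_undup.
Qed.

Definition embed_pieces (k : nat) (x : A) : seq piece :=
  [seq (k, (b, hpart gamma b x)) | b <- [:: false; true]].

Fixpoint expansion (L : seq (nat * A)) : seq (seq piece) :=
  if L is q :: L' then [seq w :: W | w <- embed_pieces q.1 q.2, W <- expansion L']
  else [:: [::]].

Lemma expansion_cons q L :
  expansion (q :: L) = [seq w :: W | w <- embed_pieces q.1 q.2, W <- expansion L].
Proof. by []. Qed.

Lemma big_tens_embed (L : seq (nat * A)) :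
  \big[@tens_mul R A/@tens_one R A]_(q <- L) tens_embed gamma q.1 q.2
    = [seq word_term W | W <- expansion L].
Proof.
elim: L => [|q L IH]; first by rewrite big_nil.
by rewrite big_cons IH expansion_cons [RHS]map_allpairs /tens_mul allpairs_mapr.
Qed.

Lemma expansion_relabel s L : expansion (relabel s L) = map (relabel s) (expansion L).
Proof.
by elim: L => // q L IH; rewrite !expansion_cons IH [RHS]map_allpairs allpairs_mapr.
Qed.

Lemma expansion_homogeneous L W :
  W \in expansion L -> {in W, forall w, homogeneous w.2}.
Proof.
elim: L W => [|q L IH] W; first by rewrite inE => /eqP ->.
rewrite expansion_cons => /allpairsPdep[w [W' [wq W'L ->]]] v.
rewrite inE => /predU1P[->|]; last exact: IH.
by case/mapP: wq => b _ ->; apply: hpart_homogeneous.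
Qed.

Lemma tens_phi_relabel_expansion s L :
  injective s ->
  tens_phi phi [seq word_term W | W <- map (relabel s) (expansion L)]
    = tens_phi phi [seq word_term W | W <- expansion L].
Proof.
move=> s_inj; rewrite /tens_phi !big_map; apply: eq_big_seq => W WL.
exact: hterm_phi_word_relabel (expansion_homogeneous WL).
Qed.
End GradedSpace.

Theorem proposition4p21 (R : realType) (A : algType R[i])
    (gamma : A -> A) (phi : A -> R[i]) :
  graded_ncps gamma phi ->
  forall (n : nat) (X : 'I_n -> A) (i : 'I_n -> nat) (sigma : nat -> nat),
    bijective sigma ->
    tens_phi phi (\big[@tens_mul R A/@tens_one R A]_(j < n)
                     tens_embed gamma (i j) (X j))
    = tens_phi phi (\big[@tens_mul R A/@tens_one R A]_(j < n)
                     tens_embed gamma (sigma (i j)) (X j)).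
Proof.
move=> graded n X i sigma /bij_inj sigma_inj.
pose L := [seq (i j, X j) | j <- index_enum 'I_n].
have expandE s :
    \big[@tens_mul R A/@tens_one R A]_(j < n) tens_embed gamma (s (i j)) (X j)
    = [seq word_term W | W <- map (relabel s) (expansion gamma L)].
  by rewrite -expansion_relabel -big_tens_embed /relabel !big_map.
by rewrite (expandE id) (expandE sigma) !tens_phi_relabel_expansion.
Qed.
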